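(* Let $d\ge 2$ and $\overrightarrow{w}\in(0,\infty)^d$, and let $\mathbb{C}$ be the set of all $d$-dimensional copulas that are $\overrightarrow{w}$-CM. Then $\mathbb{C}$ is minimal in set concordance ordering; that is, if $C\in\mathbb{C}$ and $C^*$ is any $d$-dimensional copula with $C^*\prec C$, then $C^*\in\mathbb{C}$.
   Context: A $d$-dimensional copula $C$ is $\overrightarrow{w}$-CM if a random vector $\overrightarrow{U}=(U_1,\dots,U_d)$ with distribution function $C$ (so each $U_i$ is uniform on $[0,1]$) satisfies $P\left(\sum_{i=1}^d w_iU_i=\frac12\sum_{i=1}^d w_i\right)=1$. For distribution functions $H,H^*$ on $\mathbb{R}^d$ with the same marginals, the concordance ordering $H\prec H^*$ means $H(\overrightarrow{x})\le H^*(\overrightarrow{x})$ and $\overline{H}(\overrightarrow{x})\le\overline{H^*}(\overrightarrow{x})$ for all $\overrightarrow{x}\in\mathbb{R}^d$, where $\overline{H}(\overrightarrow{x})=P(X_1>x_1,\dots,X_d>x_d)$ is the joint survival function. A set $\mathbb{C}$ of copulas is minimal in set concordance ordering if $C\in\mathbb{C}$ and $C^*\prec C$ imply $C^*\in\mathbb{C}$ (the empty set is trivially minimal). *)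

From Stdlib Require Import Reals.
Open Scope R_scope.

(* Points of R^d: only the coordinates i < d are meaningful. *)
Definition point := nat -> R.
Definition pset := point -> Prop.

Fixpoint sumd (n : nat) (f : nat -> R) : R :=
  match n with
  | O => 0
  | S m => sumd m f + f m
  end.

Inductive borel (d : nat) : pset -> Prop :=
| borel_box : forall a b : point,
    borel d (fun x => forall i, (i < d)%nat -> a i < x i < b i)
| borel_compl : forall A, borel d A -> borel d (fun x => ~ A x)
| borel_union : forall A : nat -> pset, (forall n, borel d (A n)) ->
    borel d (fun x => exists n, A n x)
| borel_ext : forall A B : pset, (forall x, A x <-> B x) -> borel d A -> borel d B.

(* Probability measures on the Borel sets of R^d (values on non-Borel sets
   are irrelevant). *)
Record prob_measure (d : nat) := {
  pm :> pset -> R;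
  pm_nonneg : forall A, borel d A -> 0 <= pm A;
  pm_total : pm (fun _ => True) = 1;
  pm_sigma : forall A : nat -> pset,
    (forall n, borel d (A n)) ->
    (forall m n x, m <> n -> A m x -> A n x -> False) ->
    infinite_sum (fun n => pm (A n)) (pm (fun x => exists n, A n x))
}.

Definition dist_fun {d : nat} (mu : prob_measure d) : point -> R :=
  fun x => mu (fun y => forall i, (i < d)%nat -> y i <= x i).

Definition surv_fun {d : nat} (mu : prob_measure d) : point -> R :=
  fun x => mu (fun y => forall i, (i < d)%nat -> x i < y i).

Definition is_copula (d : nat) (C : point -> R) : Prop :=
  exists mu : prob_measure d,
    dist_fun mu = C /\
    (forall i t, (i < d)%nat -> mu (fun y => y i <= t) = Rmax 0 (Rmin t 1)).

Definition w_CM (d : nat) (w : point) (C : point -> R) : Prop :=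
  forall mu : prob_measure d, dist_fun mu = C ->
    mu (fun y => sumd d (fun i => w i * y i) = / 2 * sumd d w) = 1.

Definition conc_le (d : nat) (H1 H2 : point -> R) : Prop :=
  forall mu1 mu2 : prob_measure d, dist_fun mu1 = H1 -> dist_fun mu2 = H2 ->
    forall x, dist_fun mu1 x <= dist_fun mu2 x /\ surv_fun mu1 x <= surv_fun mu2 x.

Definition minimal_conc (d : nat) (S : (point -> R) -> Prop) : Prop :=
  forall C Cs, S C -> is_copula d Cs -> conc_le d Cs C -> S Cs.

From Stdlib Require Import Reals Lra Lia ZArith Classical FunctionalExtensionality PropExtensionality IndefiniteDescription.
Open Scope R_scope.

(* Write S(u) = sum_i w_i u_i and c = (1/2) sum_i w_i.  The event {S < c} is a
   countable union of lower orthants {u <= x} with S(x) < c (x ranging over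
   finer and finer grids), and {S > c} is a countable union of upper orthants
   {u > x} with S(x) >= c.  If C is w-CM, all these orthants are C-null; since
   C* ≺ C bounds the C*-mass of lower orthants by the distribution function and
   that of upper orthants by the survival function of C, they are C*-null too,
   so C* also puts full mass on {S = c}. *)

Lemma set_ext (A B : pset) : (forall x, A x <-> B x) -> A = B.
Proof.
  intro H; apply functional_extensionality; intro x.
  apply propositional_extensionality; auto.
Qed.

Definition wsum (d : nat) (w y : point) : R := sumd d (fun i => w i * y i).

Lemma sumd_nonneg (d : nat) (f : nat -> R) :
  (forall i, (i < d)%nat -> 0 <= f i) -> 0 <= sumd d f.
Proof.
  induction d as [|d IH]; intro H; simpl; [lra|].
  assert (0 <= f d) by (apply H; lia).
  assert (0 <= sumd d f) by (apply IH; intros; apply H; lia).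
  lra.
Qed.

Lemma sumd_ge_term (d : nat) (f : nat -> R) (j : nat) :
  (forall i, (i < d)%nat -> 0 <= f i) -> (j < d)%nat -> f j <= sumd d f.
Proof.
  induction d as [|d IH]; intros H Hj; [lia|]; simpl.
  assert (0 <= f d) by (apply H; lia).
  destruct (Nat.eq_dec j d) as [->|Hjd].
  - assert (0 <= sumd d f) by (apply sumd_nonneg; intros; apply H; lia). lra.
  - assert (f j <= sumd d f) by (apply IH; [intros; apply H; lia | lia]). lra.
Qed.

Lemma wsum_le_shift (d : nat) (w x y : point) (e : R) :
  (forall i, (i < d)%nat -> 0 < w i) ->
  (forall i, (i < d)%nat -> y i <= x i + e) ->
  wsum d w y <= wsum d w x + e * sumd d w.
Proof.
  unfold wsum. induction d as [|d IH]; intros Hw H; simpl; [lra|].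
  assert (IHd := IH (fun i Hi => Hw i ltac:(lia)) (fun i Hi => H i ltac:(lia))).
  assert (w d * y d <= w d * (x d + e))
    by (apply Rmult_le_compat_l; [left; apply Hw; lia | apply H; lia]).
  nra.
Qed.

Lemma wsum_lt (d : nat) (w x y : point) : (1 <= d)%nat ->
  (forall i, (i < d)%nat -> 0 < w i) ->
  (forall i, (i < d)%nat -> y i < x i) -> wsum d w y < wsum d w x.
Proof.
  intros Hd Hw H. destruct d as [|d]; [lia|].
  assert (Hle : wsum d w y <= wsum d w x + 0 * sumd d w).
  { apply wsum_le_shift; intros i Hi; [apply Hw; lia|].
    specialize (H i ltac:(lia)); lra. }
  assert (w d * y d < w d * x d)
    by (apply Rmult_lt_compat_l; [apply Hw; lia | apply H; lia]).
  unfold wsum in *; simpl; lra.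
Qed.

Section BorelSets.
Variable d : nat.

Lemma borel_full : borel d (fun _ => True).
Proof.
  set (B := fun x : point => forall i, (i < d)%nat -> 0 < x i < 1).
  assert (HB : borel d B) by apply borel_box.
  apply (borel_ext d (fun x => exists n, (match n with O => B | _ => fun x => ~ B x end) x)).
  - intro x; split; auto. intros _.
    destruct (classic (B x)); [exists O | exists 1%nat]; auto.
  - apply borel_union. intros [|n]; auto. apply borel_compl; auto.
Qed.

Lemma borel_empty : borel d (fun _ => False).
Proof.
  apply (borel_ext d (fun x => ~ True)); [intuition|].
  apply borel_compl, borel_full.
Qed.

Lemma borel_or (A B : pset) : borel d A -> borel d B -> borel d (fun x => A x \/ B x).
Proof.
  intros HA HB.
  apply (borel_ext d (fun x => exists n, (match n with O => A | _ => B end) x)).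
  - intro x; split.
    + intros [[|n] H]; auto.
    + intros [H|H]; [exists O | exists 1%nat]; auto.
  - apply borel_union. intros [|n]; auto.
Qed.

Lemma borel_and (A B : pset) : borel d A -> borel d B -> borel d (fun x => A x /\ B x).
Proof.
  intros HA HB. apply (borel_ext d (fun x => ~ (~ A x \/ ~ B x))).
  - intro x; split.
    + intro H; split; apply NNPP; intro; apply H; auto.
    + intros [] []; auto.
  - apply borel_compl, borel_or; apply borel_compl; auto.
Qed.

Lemma borel_guard (P : Prop) (A : pset) : borel d A -> borel d (fun x => P /\ A x).
Proof.
  intro HA. destruct (classic P) as [HP|HP].
  - apply (borel_ext d A); tauto.
  - apply (borel_ext d (fun _ => False)); [tauto | apply borel_empty].
Qed.

Lemma borel_coord_gt (i : nat) (a : R) : (i < d)%nat -> borel d (fun y => a < y i).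
Proof.
  intro Hi.
  set (box := fun n : nat => fun y : point => forall j, (j < d)%nat ->
     (if Nat.eqb j i then a else - INR n) < y j
     < (if Nat.eqb j i then a + INR n else INR n)).
  apply (borel_ext d (fun y => exists n, box n y)).
  - intro y; split.
    + intros [n Hn]. specialize (Hn i Hi). rewrite Nat.eqb_refl in Hn. lra.
    + intro Ha.
      destruct (INR_unbounded (Rabs (y i - a) + sumd d (fun j => Rabs (y j)))) as [n Hn].
      exists n. intros j Hj.
      assert (Rabs (y j) <= sumd d (fun j => Rabs (y j)))
        by (apply (sumd_ge_term d (fun j => Rabs (y j))); auto; intros; apply Rabs_pos).
      pose proof (Rabs_pos (y i - a)).
      destruct (Nat.eqb_spec j i); [subst; split; auto|]; split_Rabs; lra.
  - apply borel_union. intro n. apply borel_box.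
Qed.

Definition lower_orthant (x : point) : pset := fun y => forall i, (i < d)%nat -> y i <= x i.
Definition upper_orthant (x : point) : pset := fun y => forall i, (i < d)%nat -> x i < y i.

Lemma borel_lower_orthant (x : point) : borel d (lower_orthant x).
Proof.
  apply (borel_ext d (fun y => ~ exists i, (i < d)%nat /\ x i < y i)).
  - intro y; split.
    + intros H i Hi. apply Rnot_lt_le. intro; apply H; eauto.
    + intros H [i [Hi Hl]]. specialize (H i Hi). lra.
  - apply borel_compl, borel_union. intro i.
    apply (borel_ext d (fun y => (i < d)%nat /\ x i < y i)); [tauto|].
    destruct (Compare_dec.lt_dec i d).
    + apply (borel_ext d (fun y => x i < y i)); [tauto | now apply borel_coord_gt].
    + apply (borel_ext d (fun _ => False)); [tauto | apply borel_empty].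
Qed.

Lemma borel_upper_orthant (x : point) : borel d (upper_orthant x).
Proof.
  apply (borel_ext d (fun y => ~ exists i, (i < d)%nat /\ ~ x i < y i)).
  - intro y; split.
    + intros H i Hi. apply NNPP. intro; apply H; eauto.
    + intros H [i [Hi Hl]]. auto.
  - apply borel_compl, borel_union. intro i.
    destruct (Compare_dec.lt_dec i d).
    + apply (borel_ext d (fun y => ~ x i < y i)); [tauto|].
      apply borel_compl, borel_coord_gt; auto.
    + apply (borel_ext d (fun _ => False)); [tauto | apply borel_empty].
Qed.

End BorelSets.

Lemma infinite_sum_eventually_const (f : nat -> R) (l v : R) (N0 : nat) :
  infinite_sum f l -> (forall n, (n >= N0)%nat -> sum_f_R0 f n = v) -> l = v.
Proof.
  intros Hs Hv. destruct (Req_dec l v) as [|Hne]; auto.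
  assert (He : Rdist v l > 0) by (unfold Rdist; apply Rabs_pos_lt; lra).
  destruct (Hs _ He) as [N HN].
  specialize (HN (max N N0) ltac:(lia)). rewrite Hv in HN by lia. lra.
Qed.

Section ProbabilityMeasure.
Variables (d : nat) (mu : prob_measure d).

Lemma pm_empty : mu (fun _ => False) = 0.
Proof.
  pose proof (pm_sigma d mu (fun _ _ => False) (fun _ => borel_empty d) ltac:(auto)) as H.
  cbv beta in H.
  replace (fun x : point => exists _ : nat, False) with (fun _ : point => False) in H
    by (apply set_ext; intro; split; [tauto | intros [_ []]]).
  set (a := mu (fun _ => False)) in *.
  (* The constant series a + a + ... converges to a only if a = 0. *)
  destruct (Req_dec a 0) as [|Hn]; auto.
  assert (Hp : Rabs a / 2 > 0) by (apply Rabs_pos_lt in Hn; lra).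
  destruct (H _ Hp) as [N HN]. specialize (HN (S N) ltac:(lia)).
  rewrite sum_cte in HN. unfold Rdist in HN.
  replace (a * INR (S (S N)) - a) with (a * INR (S N)) in HN by (rewrite (S_INR (S N)); ring).
  rewrite Rabs_mult, (Rabs_right (INR (S N))) in HN by (apply Rle_ge, pos_INR).
  assert (1 <= INR (S N)) by (rewrite S_INR; pose proof (pos_INR N); lra).
  pose proof (Rabs_pos a). nra.
Qed.

Lemma pm_add (A B : pset) : borel d A -> borel d B ->
  (forall x, A x -> B x -> False) -> mu (fun x => A x \/ B x) = mu A + mu B.
Proof.
  intros HA HB Hd.
  set (F := fun n => match n with O => A | 1%nat => B | _ => fun _ : point => False end).
  assert (HF : forall n, borel d (F n)) by (intros [|[|n]]; simpl; auto; apply borel_empty).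
  assert (HD : forall m n x, m <> n -> F m x -> F n x -> False)
    by (intros [|[|m]] [|[|n]] x Hmn; simpl; intros; eauto; lia).
  pose proof (pm_sigma d mu F HF HD) as H.
  replace (fun x : point => exists n, F n x) with (fun x => A x \/ B x) in H.
  2:{ apply set_ext; intro x; split.
      - intros [H1|H1]; [exists O | exists 1%nat]; auto.
      - intros [[|[|n]] H1]; simpl in H1; tauto. }
  apply (infinite_sum_eventually_const _ _ _ 1%nat H).
  intros n Hn. induction n as [|n IH]; [lia|].
  destruct n; [simpl; ring|].
  change (sum_f_R0 (fun n => mu (F n)) (S n) + mu (fun _ => False) = mu A + mu B).
  rewrite IH, pm_empty by lia. ring.
Qed.

Lemma pm_mono (A B : pset) : borel d A -> borel d B ->
  (forall x, A x -> B x) -> mu A <= mu B.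
Proof.
  intros HA HB Hs.
  assert (HBA : borel d (fun x => B x /\ ~ A x))
    by (apply borel_and; auto; apply borel_compl; auto).
  replace B with (fun x => A x \/ (B x /\ ~ A x)).
  2:{ apply set_ext; intro x; split; [intros [|[]]; auto|].
      intro; destruct (classic (A x)); auto. }
  rewrite pm_add by (auto; intros x ? []; auto).
  pose proof (pm_nonneg d mu _ HBA). lra.
Qed.

Lemma pm_null_union (A : nat -> pset) :
  (forall n, borel d (A n)) -> (forall n, mu (A n) = 0) ->
  mu (fun x => exists n, A n x) = 0.
Proof.
  intros HA H0.
  (* Disjointify: B n = A n minus the earlier A k. *)
  set (B := fun n x => A n x /\ ~ (exists k, (k < n)%nat /\ A k x)).
  assert (HB : forall n, borel d (B n)).
  { intro n. apply borel_and; auto. apply borel_compl, borel_union. intro k.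
    destruct (Compare_dec.lt_dec k n).
    - apply (borel_ext d (A k)); auto; intuition.
    - apply (borel_ext d (fun _ => False)); [intuition | apply borel_empty]. }
  assert (HD : forall m n x, m <> n -> B m x -> B n x -> False).
  { intros m n x Hmn [Hm Hm'] [Hn Hn']. destruct (Compare_dec.lt_dec m n).
    - apply Hn'; eauto.
    - apply Hm'. exists n; split; auto; lia. }
  pose proof (pm_sigma d mu B HB HD) as H.
  replace (fun x : point => exists n, B n x) with (fun x => exists n, A n x) in H.
  2:{ apply set_ext; intro x; split.
      - intros [n Hn]. revert Hn. induction n as [n IH] using lt_wf_ind. intro Hn.
        destruct (classic (exists k, (k < n)%nat /\ A k x)) as [[k [Hk1 Hk2]]|Hno].
        + exact (IH k Hk1 Hk2).
        + exists n; split; auto.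
      - intros [n [Hn _]]; eauto. }
  apply (infinite_sum_eventually_const _ _ _ O H). intros n _.
  assert (Hz : forall k, mu (B k) = 0).
  { intro k. apply Rle_antisym; [|apply pm_nonneg; auto].
    rewrite <- (H0 k). apply pm_mono; auto. intros x []; auto. }
  induction n; simpl; rewrite ?IHn, Hz; ring.
Qed.

Lemma pm_guard_null (P : Prop) (A : pset) : (P -> mu A = 0) -> mu (fun x => P /\ A x) = 0.
Proof.
  intro H. destruct (classic P) as [HP|HP].
  - rewrite <- (H HP). f_equal. apply set_ext. tauto.
  - rewrite <- pm_empty. f_equal. apply set_ext. tauto.
Qed.

Lemma pm_trichotomy (f : point -> R) (c : R) :
  borel d (fun y => f y < c) -> borel d (fun y => c < f y) ->
  mu (fun y => f y = c) = 1 - mu (fun y => f y < c) - mu (fun y => c < f y).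
Proof.
  intros HL HG.
  assert (HE : borel d (fun y => f y = c)).
  { apply (borel_ext d (fun y => ~ (f y < c \/ c < f y))).
    - intro y; split; intro H; [|lra].
      destruct (Rtotal_order (f y) c) as [|[|]]; auto; exfalso; apply H; auto.
    - apply borel_compl, borel_or; auto. }
  rewrite <- (pm_total d mu).
  replace (fun _ : point => True) with (fun y => f y = c \/ (f y < c \/ c < f y)).
  2:{ apply set_ext; intro y; split; auto. intros _.
      destruct (Rtotal_order (f y) c) as [|[|]]; auto. }
  rewrite !pm_add by (auto using borel_or; intros y; lra).
  ring.
Qed.

End ProbabilityMeasure.

Fixpoint digit (K i n : nat) : nat :=
  match i with O => (n mod K)%nat | S i => digit K i (n / K)%nat end.

Fixpoint encode (K : nat) (g : nat -> nat) (l : nat) : nat :=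
  match l with O => O | S l => (g O + K * encode K (fun i => g (S i)) l)%nat end.

Lemma digit_encode (K l : nat) (g : nat -> nat) (i : nat) : K <> O ->
  (forall j, (j < l)%nat -> (g j < K)%nat) -> (i < l)%nat ->
  digit K i (encode K g l) = g i.
Proof.
  revert g i. induction l as [|l IH]; intros g i HK Hg Hi; [lia|]. simpl.
  destruct i as [|i]; simpl.
  - rewrite Nat.mul_comm, Nat.Div0.mod_add. apply Nat.mod_small, Hg; lia.
  - rewrite Nat.mul_comm, Nat.div_add, Nat.div_small by (auto; apply Hg; lia). simpl.
    apply (IH (fun i => g (S i))); [auto | | lia]. intros; apply Hg; lia.
Qed.

(* The n-th point of the grid of mesh 1/M on [-M, M)^d, M = m + 1, whose
   coordinates are read off the base 2M^2 digits of n. *)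
Definition grid (m n : nat) : point :=
  fun i => INR (digit (2 * S m * S m) i n) / INR (S m) - INR (S m).

Lemma INR_Z_to_nat (z : Z) : (0 <= z)%Z -> INR (Z.to_nat z) = IZR z.
Proof. intro H. rewrite INR_IZR_INZ, Z2Nat.id; auto. Qed.

Lemma grid_index_near (M : nat) (t : R) : (0 < M)%nat -> Rabs t + 2 < INR M ->
  exists j, (j < 2 * M * M)%nat /\ t <= INR j / INR M - INR M <= t + / INR M.
Proof.
  intros HM Ht. assert (HMr : 0 < INR M) by (apply lt_0_INR; lia).
  set (s := (t + INR M) * INR M). destruct (archimed s) as [H1 H2].
  assert (Hs : 0 < s) by (unfold s; apply Rmult_lt_0_compat; [split_Rabs; lra | lra]).
  assert (Hz : (0 <= up s)%Z) by (apply le_0_IZR; lra).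
  exists (Z.to_nat (up s)). rewrite INR_Z_to_nat by auto. split.
  - apply INR_lt. rewrite INR_Z_to_nat by auto. rewrite !mult_INR. simpl (INR 2).
    unfold s in *. assert (t < INR M - 2) by (split_Rabs; lra). nra.
  - unfold s in *. split.
    + apply (Rmult_le_reg_r (INR M)); auto. field_simplify; nra.
    + apply (Rmult_le_reg_r (INR M)); auto. field_simplify; nra.
Qed.

Lemma grid_point_near (d m : nat) (z : point) :
  (forall i, (i < d)%nat -> Rabs (z i) + 2 < INR (S m)) ->
  exists n, forall i, (i < d)%nat -> z i <= grid m n i <= z i + / INR (S m).
Proof.
  intro Hz.
  assert (Hc : forall i, exists j, (i < d)%nat -> (j < 2 * S m * S m)%nat /\
    z i <= INR j / INR (S m) - INR (S m) <= z i + / INR (S m)).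
  { intro i. destruct (Compare_dec.lt_dec i d) as [Hi|Hi].
    - destruct (grid_index_near (S m) (z i)) as [j Hj]; [lia | auto |]. exists j; auto.
    - exists O; intro; lia. }
  destruct (functional_choice _ Hc) as [g Hg].
  exists (encode (2 * S m * S m) g d). intros i Hi. unfold grid.
  rewrite digit_encode; [apply Hg; auto | lia | intros j Hj; apply Hg; auto | auto].
Qed.

Lemma mesh_index_large (d : nat) (y : point) (a : R) :
  exists m, (forall i, (i < d)%nat -> Rabs (y i) + 4 < INR (S m)) /\ a < INR (S m).
Proof.
  destruct (INR_unbounded (sumd d (fun j => Rabs (y j)) + 4 + Rabs a)) as [n Hn].
  exists n. rewrite S_INR. pose proof (Rle_abs a).
  pose proof (sumd_nonneg d (fun j => Rabs (y j)) (fun j _ => Rabs_pos (y j))).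
  split; [|lra]. intros i Hi.
  assert (Rabs (y i) <= sumd d (fun j => Rabs (y j)))
    by (apply (sumd_ge_term d (fun j => Rabs (y j))); auto; intros; apply Rabs_pos).
  pose proof (Rabs_pos a). lra.
Qed.

Section WeightedSumLevelSets.
Variables (d : nat) (w : point) (c : R).
Hypothesis Hw : forall i, (i < d)%nat -> 0 < w i.

Lemma wsum_lt_cover (y : point) :
  wsum d w y < c <->
  exists m n, wsum d w (grid m n) < c /\ lower_orthant d (grid m n) y.
Proof.
  split.
  - intro H.
    destruct (mesh_index_large d y (sumd d w / (c - wsum d w y))) as [m [Hm1 Hm2]].
    assert (HM : 0 < INR (S m)) by (apply lt_0_INR; lia).
    destruct (grid_point_near d m y) as [n Hn]; [intros i Hi; specialize (Hm1 i Hi); lra|].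
    exists m, n. split; [|intros i Hi; apply Hn; auto].
    assert (Hs := wsum_le_shift d w y (grid m n) (/ INR (S m)) Hw
                    (fun i Hi => proj2 (Hn i Hi))).
    assert (/ INR (S m) * sumd d w < c - wsum d w y).
    { apply (Rmult_lt_reg_l (INR (S m))); auto.
      apply (Rmult_lt_compat_r (c - wsum d w y)) in Hm2; [|lra].
      field_simplify in Hm2; [|lra]. field_simplify; lra. }
    lra.
  - intros [m [n [H1 H2]]].
    assert (Hs := wsum_le_shift d w (grid m n) y 0 Hw
                    ltac:(intros i Hi; specialize (H2 i Hi); lra)).
    lra.
Qed.

Lemma borel_wsum_lt : borel d (fun y => wsum d w y < c).
Proof.
  apply (borel_ext d (fun y => exists m n,
           wsum d w (grid m n) < c /\ lower_orthant d (grid m n) y)).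
  - intro y; symmetry; apply wsum_lt_cover.
  - apply borel_union; intro m; apply borel_union; intro n.
    apply borel_guard, borel_lower_orthant.
Qed.

Hypothesis Hd : (1 <= d)%nat.

Lemma wsum_gt_cover (y : point) :
  c < wsum d w y <->
  exists m n, c <= wsum d w (grid m n) /\ upper_orthant d (grid m n) y.
Proof.
  split.
  - intro H.
    destruct (mesh_index_large d y (2 * sumd d w / (wsum d w y - c))) as [m [Hm1 Hm2]].
    assert (HM : 1 <= INR (S m)) by (rewrite S_INR; pose proof (pos_INR m); lra).
    (* Approximate y - 2/M from above: the grid point lands strictly below y. *)
    destruct (grid_point_near d m (fun i => y i - 2 / INR (S m))) as [n Hn].
    { intros i Hi. specialize (Hm1 i Hi).
      assert (/ INR (S m) <= 1) by (rewrite <- Rinv_1; apply Rinv_le_contravar; lra).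
      assert (0 < / INR (S m)) by (apply Rinv_0_lt_compat; lra).
      unfold Rdiv; split_Rabs; lra. }
    exists m, n.
    assert (Hinv : / INR (S m) < 2 / INR (S m))
      by (unfold Rdiv; pose proof (Rinv_0_lt_compat (INR (S m)) ltac:(lra)); lra).
    split; [|intros i Hi; specialize (Hn i Hi); lra].
    assert (Hs := wsum_le_shift d w (grid m n) y (2 / INR (S m)) Hw
                    ltac:(intros i Hi; specialize (Hn i Hi); lra)).
    assert (2 / INR (S m) * sumd d w < wsum d w y - c).
    { apply (Rmult_lt_reg_l (INR (S m))); [lra|].
      apply (Rmult_lt_compat_r (wsum d w y - c)) in Hm2; [|lra].
      field_simplify in Hm2; [|lra]. field_simplify; lra. }
    lra.
  - intros [m [n [H1 H2]]]. pose proof (wsum_lt d w y (grid m n) Hd Hw H2). lra.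
Qed.

Lemma borel_wsum_gt : borel d (fun y => c < wsum d w y).
Proof.
  apply (borel_ext d (fun y => exists m n,
           c <= wsum d w (grid m n) /\ upper_orthant d (grid m n) y)).
  - intro y; symmetry; apply wsum_gt_cover.
  - apply borel_union; intro m; apply borel_union; intro n.
    apply borel_guard, borel_upper_orthant.
Qed.

Variables mu nu : prob_measure d.

Lemma wsum_lt_null_of_dist_le :
  (forall x, dist_fun mu x <= dist_fun nu x) ->
  nu (fun y => wsum d w y < c) = 0 -> mu (fun y => wsum d w y < c) = 0.
Proof.
  intros Hle Hnu.
  replace (fun y => wsum d w y < c) with (fun y => exists m n,
             wsum d w (grid m n) < c /\ lower_orthant d (grid m n) y)
    by (apply set_ext; intro y; symmetry; apply wsum_lt_cover).
  apply pm_null_union; [intro m; apply borel_union; intro n;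
                        apply borel_guard, borel_lower_orthant|].
  intro m. apply pm_null_union; [intro n; apply borel_guard, borel_lower_orthant|].
  intro n. apply pm_guard_null. intro Hx.
  apply Rle_antisym; [|apply pm_nonneg, borel_lower_orthant].
  rewrite <- Hnu. eapply Rle_trans; [apply Hle|].
  apply pm_mono; [apply borel_lower_orthant | apply borel_wsum_lt |].
  intros y Hy. pose proof (wsum_le_shift d w (grid m n) y 0 Hw
                             ltac:(intros i Hi; specialize (Hy i Hi); lra)).
  lra.
Qed.

Lemma wsum_gt_null_of_surv_le :
  (forall x, surv_fun mu x <= surv_fun nu x) ->
  nu (fun y => c < wsum d w y) = 0 -> mu (fun y => c < wsum d w y) = 0.
Proof.
  intros Hle Hnu.
  replace (fun y => c < wsum d w y) with (fun y => exists m n,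
             c <= wsum d w (grid m n) /\ upper_orthant d (grid m n) y)
    by (apply set_ext; intro y; symmetry; apply wsum_gt_cover).
  apply pm_null_union; [intro m; apply borel_union; intro n;
                        apply borel_guard, borel_upper_orthant|].
  intro m. apply pm_null_union; [intro n; apply borel_guard, borel_upper_orthant|].
  intro n. apply pm_guard_null. intro Hx.
  apply Rle_antisym; [|apply pm_nonneg, borel_upper_orthant].
  rewrite <- Hnu. eapply Rle_trans; [apply Hle|].
  apply pm_mono; [apply borel_upper_orthant | apply borel_wsum_gt |].
  intros y Hy. pose proof (wsum_lt d w y (grid m n) Hd Hw Hy). lra.
Qed.

End WeightedSumLevelSets.

Theorem mainTheorem3 (d : nat) (w : point) :
  (2 <= d)%nat ->
  (forall i, (i < d)%nat -> 0 < w i) ->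
  minimal_conc d (fun C => is_copula d C /\ w_CM d w C).
Proof.
  intros Hd2 Hw C Cs [[nu [Hnu _]] HCM] HCs Hle. split; auto. intros mu Hmu.
  assert (Hd : (1 <= d)%nat) by lia.
  set (c := / 2 * sumd d w).
  change (mu (fun y => wsum d w y = c) = 1).
  assert (Hnu_eq : nu (fun y => wsum d w y = c) = 1) by (apply HCM; auto).
  rewrite (pm_trichotomy d nu) in Hnu_eq
    by (apply borel_wsum_lt || apply borel_wsum_gt; auto).
  pose proof (pm_nonneg d nu _ (borel_wsum_lt d w c Hw)).
  pose proof (pm_nonneg d nu _ (borel_wsum_gt d w c Hw Hd)).
  assert (Hlt : mu (fun y => wsum d w y < c) = 0).
  { apply (wsum_lt_null_of_dist_le d w c Hw mu nu);
      [intro x; apply (Hle mu nu Hmu Hnu x) | lra]. }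
  assert (Hgt : mu (fun y => c < wsum d w y) = 0).
  { apply (wsum_gt_null_of_surv_le d w c Hw Hd mu nu);
      [intro x; apply (Hle mu nu Hmu Hnu x) | lra]. }
  rewrite (pm_trichotomy d mu)
    by (apply borel_wsum_lt || apply borel_wsum_gt; auto).
  lra.
Qed.
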